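(* Let $\mathbb{F}$ be a finite field of odd characteristic and $\lambda$ the quadratic character of $\mathbb{F}^\times$ extended by $\lambda(0)=0$. For $z\in\mathbb{F}$ and $\gamma\in\mathbb{F}^\times$ let $X_{\mathbb{F},\gamma}(z)=\{(u,v)\in\mathbb{F}^2: v^2-(u^2-uz-4\gamma)v+\gamma z^2=0\}$. Then $$|X_{\mathbb{F},\gamma}(z)|=|\mathbb{F}|(1+\delta_{z,0})-1+\sum_{x\in\mathbb{F}}\lambda\big(x(x+16\gamma)(x+z^2)\big),$$ where $\delta_{z,0}=1$ if $z=0$ and $0$ otherwise. *)

From HB Require Import structures.
From mathcomp Require Import all_boot all_order all_algebra all_field.
Set Implicit Arguments. Unset Strict Implicit. Unset Printing Implicit Defensive.
Import GRing.Theory Num.Theory.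
Local Open Scope ring_scope.

Definition qchar (F : finFieldType) (x : F) : int :=
  if x == 0 then 0 else if [exists y : F, y ^+ 2 == x] then 1 else -1.

Definition Xset (F : finFieldType) (gamma z : F) : {set F * F} :=
  [set uv : F * F | uv.2 ^+ 2 - (uv.1 ^+ 2 - uv.1 * z - 4%:R * gamma) * uv.2
                    + gamma * z ^+ 2 == 0].

From HB Require Import structures.
From mathcomp Require Import all_boot all_order all_algebra all_field.
From mathcomp Require Import ring.
Import GRing.Theory Num.Theory.
Local Open Scope ring_scope.

(* Count the points of X(z) fibre by fibre over v.  Over v = 0 the equation
   reduces to gamma z^2 = 0, so the fibre is all of F when z = 0 and empty
   otherwise.  Over v != 0 it is a monic quadratic in u with discriminant
   (v + 4 gamma)(4 v + z^2) / v, which differs by the square (4 v)^2 from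
   x (x + 16 gamma)(x + z^2) at x = 4 v.  The fibre thus has 1 + lambda of that
   cubic points, and summing over v != 0 (the cubic vanishes at x = 0) gives
   the character sum. *)

Lemma card_partition_snd (T1 T2 : finType) (A : {set T1 * T2}) :
  #|A| = (\sum_(y : T2) #|[set x | (x, y) \in A]|)%N.
Proof.
rewrite -sum1_card (partition_big snd predT) //=.
apply: eq_bigr => y _; rewrite sum1_card.
have pair_inj : injective (fun x : T1 => (x, y)) by move=> x1 x2 [].
rewrite -(card_imset _ pair_inj); apply: eq_card => -[a b]; rewrite unfold_in /=.
apply/andP/imsetP => [[Aab /eqP /= <-]|[x]]; first by exists a; rewrite ?inE.
by rewrite inE => Axy [-> ->].
Qed.

Section QuadraticCharacter.

Variable F : finFieldType.

Lemma qcharMsqr (a s : F) : s != 0 -> qchar (a * s ^+ 2) = qchar a.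
Proof.
move=> s0; rewrite /qchar mulf_eq0 sqrf_eq0 (negbTE s0) orbF.
case: eqP => // _; congr (if _ then _ else _).
apply/existsP/existsP => -[y /eqP Hy]; [exists (y / s) | exists (y * s)]; apply/eqP.
  by rewrite expr_div_n Hy mulfK // sqrf_eq0.
by rewrite exprMn Hy.
Qed.

Hypothesis two_neq0 : (2%:R : F) != 0.

Lemma four_neq0 : (4%:R : F) != 0.
Proof. by rewrite (_ : 4 = 2 * 2)%N // natrM mulf_neq0. Qed.

Lemma card_sqr_eq (d : F) : #|[set w : F | w ^+ 2 == d]|%:Z = 1 + qchar d.
Proof.
rewrite /qchar; have [->|d0] := eqVneq d 0.
  have -> : [set w : F | w ^+ 2 == 0] = [set 0].
    by apply/setP => w; rewrite !inE sqrf_eq0.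
  by rewrite cards1 addr0.
case: ifP => [/existsP [y /eqP Hy]|/existsP no_root].
  have -> : [set w : F | w ^+ 2 == d] = [set y; -y].
    by apply/setP => w; rewrite !inE -Hy eqf_sqr.
  have y_neqN : y != - y.
    apply: contra d0 => /eqP yN; rewrite -Hy sqrf_eq0.
    have : 2%:R * y == 0 by rewrite mulr_natl mulr2n {1}yN addNr.
    by rewrite mulf_eq0 (negbTE two_neq0).
  by rewrite cards2 y_neqN.
have -> : [set w : F | w ^+ 2 == d] = set0.
  by apply/setP => w; rewrite !inE; apply/negP => Hw; apply: no_root; exists w.
by rewrite cards0 subrr.
Qed.

(* Completing the square: u is a root iff (2 u + a)^2 is the discriminant. *)
Lemma card_quadratic_roots (a b : F) :
  #|[set u : F | u ^+ 2 + a * u + b == 0]|%:Z = 1 + qchar (a ^+ 2 - 4%:R * b).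
Proof.
have affine_inj : injective (fun u : F => 2%:R * u + a).
  by move=> x y /addIr /(mulfI two_neq0).
rewrite -card_sqr_eq -(card_preimset [set w | w ^+ 2 == _] affine_inj).
congr (_ %:Z); apply: eq_card => u; rewrite !inE /= -[in RHS]subr_eq0.
have -> : (2%:R * u + a) ^+ 2 - (a ^+ 2 - 4%:R * b) = 4%:R * (u ^+ 2 + a * u + b).
  by ring.
by rewrite mulf_eq0 (negbTE four_neq0).
Qed.

End QuadraticCharacter.

Section Fibres.

Variables (F : finFieldType) (gamma z : F).
Hypotheses (two_neq0 : (2%:R : F) != 0) (gamma_neq0 : gamma != 0).

Definition Xfibre (v : F) : {set F} := [set u | (u, v) \in Xset gamma z].

Definition Xcubic (x : F) : F := x * (x + 16%:R * gamma) * (x + z ^+ 2).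

Lemma card_Xfibre0 : #|Xfibre 0| = if z == 0 then #|F| else 0%N.
Proof.
have -> : Xfibre 0 = [set u | gamma * z ^+ 2 == 0].
  by apply/setP => u; rewrite !inE /= expr0n /= mulr0 subr0 add0r.
rewrite mulf_eq0 (negbTE gamma_neq0) sqrf_eq0.
by case: eqP => _; rewrite ?cardsT ?cards0.
Qed.

Lemma card_Xfibre v : v != 0 -> #|Xfibre v|%:Z = 1 + qchar (Xcubic (4%:R * v)).
Proof.
move=> v0; set b := - (v ^+ 2 + 4%:R * gamma * v + gamma * z ^+ 2) / v.
have -> : Xfibre v = [set u : F | u ^+ 2 + (- z) * u + b == 0].
  apply/setP => u; rewrite !inE /=.
  have -> : v ^+ 2 - (u ^+ 2 - u * z - 4%:R * gamma) * v + gamma * z ^+ 2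
            = - v * (u ^+ 2 + (- z) * u + b) by rewrite /b; field.
  by rewrite mulf_eq0 oppr_eq0 (negbTE v0).
rewrite card_quadratic_roots //; congr (_ + _).
have -> : Xcubic (4%:R * v) = ((- z) ^+ 2 - 4%:R * b) * (4%:R * v) ^+ 2.
  by rewrite /Xcubic /b; field.
by rewrite qcharMsqr // mulf_neq0 ?four_neq0.
Qed.

End Fibres.

Theorem lemma3p4 (F : finFieldType) (hodd : (2 \notin [pchar F])%N)
  (gamma z : F) (hgamma : gamma != 0) :
  (#|Xset gamma z|%:Z =
     #|F|%:Z * (1 + (z == 0)%:Z) - 1
     + \sum_(x : F) qchar (x * (x + 16%:R * gamma) * (x + z ^+ 2)))%R.
Proof.
have two_neq0 : (2%:R : F) != 0 by apply: contraNN hodd => h; rewrite inE /= h.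
have F_gt0 : (0 < #|F|)%N by apply/card_gt0P; exists 0.
rewrite card_partition_snd -natz natr_sum (bigD1 0) //= natz card_Xfibre0 //.
under eq_bigr => v v0 do rewrite natz card_Xfibre //.
rewrite big_split /= sumr_const cardC1 natz (predn_int F_gt0).
rewrite -[\sum_x _]/(\sum_x qchar (Xcubic F gamma z x)).
rewrite [in RHS](reindex_inj (mulfI (@four_neq0 F two_neq0))) [in RHS](bigD1 0) //=.
have -> : qchar (Xcubic F gamma z (4%:R * 0)) = 0.
  by rewrite /Xcubic mulr0 !mul0r /qchar eqxx.
by case: (z == 0); rewrite /= ?addr0 ?add0r ?mulr1; ring.
Qed.
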